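(* Let $k$ be a positive integer and $n=96k$. Let $V_n=M_0\cup M_1\cup M_3\cup M_5$, where \[ M_0=\{6a:0\le a\le 18k\},\quad M_1=\{6a+1:12k\le a\le 24k-1\}, \] \[ M_3=\{6a+3:0\le a\le 54k-2\},\quad M_5=\{6a-1:12k\le a\le 24k-1\}. \] Then $V_n$ has $n$ points, and if $\mathcal P$ is the pattern of $\{0,1,3\}$ under direct similarity, then $S_{\mathcal P}(V_n)=(3n^2-8n)/16$. In particular $\lim_{n\to\infty,\,96\mid n}S_{\mathcal P}(V_n)/n^2=3/16$.
   Context: A direct similarity of $\mathbb R$ is a map $x\mapsto ax+b$ with $a>0$, $b\in\mathbb R$. $\mathcal P$ is the set of all images of $\{0,1,3\}$ under direct similarities, i.e. all sets $\{x,x+d,x+3d\}$ with $d>0$. $S_{\mathcal P}(V)$ is the number of $P\in\mathcal P$ with $P\subseteq V$. *)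

From HB Require Import structures.
From mathcomp Require Import all_boot all_order all_algebra.
From Stdlib Require Import ClassicalDescription.
Set Implicit Arguments. Unset Strict Implicit. Unset Printing Implicit Defensive.
Import Order.TTheory GRing.Theory Num.Theory.
Local Open Scope ring_scope.

Definition asbool (P : Prop) : bool :=
  if excluded_middle_informative P then true else false.

Section Pattern.
Variable R : realFieldType.

(* P (a subset of the finite set V) is an image of {0,1,3} under a direct
   similarity x |-> a x + b (a > 0), i.e. P = {x, x+d, x+3d} with d > 0. *)
Definition in_pattern (V : seq R) (P : {set seq_sub V}) : Prop :=
  exists x d : R, 0 < d /\ x \in V /\ x + d \in V /\ x + 3 * d \in V /\
    forall z : seq_sub V, z \in P <-> (val z = x \/ val z = x + d \/ val z = x + 3 * d).

Definition S_P (V : seq R) : nat :=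
  #|[set P : {set seq_sub V} | asbool (in_pattern P)]|.

Definition M0 (k : nat) : seq R := [seq (6 * a)%N%:R | a <- seq.iota 0 (18 * k + 1)%N].
Definition M1 (k : nat) : seq R := [seq (6 * a + 1)%N%:R | a <- seq.iota (12 * k)%N (12 * k)%N].
Definition M3 (k : nat) : seq R := [seq (6 * a + 3)%N%:R | a <- seq.iota 0 (54 * k - 1)%N].
Definition M5 (k : nat) : seq R := [seq (6 * a)%N%:R - 1 | a <- seq.iota (12 * k)%N (12 * k)%N].
Definition Vn (k : nat) : seq R := M0 k ++ M1 k ++ M3 k ++ M5 k.
End Pattern.

From HB Require Import structures.
From mathcomp Require Import all_boot all_order all_algebra.
From mathcomp Require Import zify ring lra.
From Stdlib Require ClassicalDescription.
Import Order.TTheory GRing.Theory Num.Theory.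
Local Open Scope ring_scope.

(* V_n is the image of a set W_n of naturals, so S_P(V_n) counts the pairs (x, d), d > 0,
   with x, x + d, x + 3d in W_n.  W_n only meets the residues 0, 1, 3, 5 modulo 6, and each
   residue class of W_n is an interval of quotients, so splitting x = 6a + r and d = 6e + s
   leaves 14 admissible residue pairs (r, s).  For each of them and fixed e, the admissible a
   form the intersection of three intervals, whose length is piecewise linear in e; summing
   the linear pieces gives 2 S_P(V_n) = 3456 k^2 - 96 k, i.e. S_P(V_n) = (3n^2 - 8n)/16. *)

Lemma asboolP (P : Prop) : asbool P = true <-> P.
Proof. by rewrite /asbool; case: ClassicalDescription.excluded_middle_informative. Qed.

Section PatternsOfNaturals.
Variables (R : realFieldType) (W : seq nat) (N : nat).
Hypothesis W_lt : forall y, y \in W -> (y < N)%N.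

Let V : seq R := [seq n%:R | n <- W].
Let T := seq_sub V.

Definition triple_set (p : 'I_N * 'I_N) : {set T} :=
  [set z : T | [|| val z == p.1%:R, val z == (p.1 + p.2)%N%:R
                 | val z == (p.1 + 3 * p.2)%N%:R]].

Definition triple_params : {set 'I_N * 'I_N} :=
  [set p : 'I_N * 'I_N |
     [&& 0 < p.2, (p.1 : nat) \in W, p.1 + p.2 \in W & p.1 + 3 * p.2 \in W]%N].

Lemma map_nat_mem {n} : n \in W -> (n%:R : R) \in V.
Proof. exact: map_f. Qed.

Lemma triple_setE {n} (Hn : n \in W) (p : 'I_N * 'I_N) :
  (SeqSub (map_nat_mem Hn) \in triple_set p) =
  [|| n == p.1, n == (p.1 + p.2)%N | n == (p.1 + 3 * p.2)%N].
Proof. by rewrite inE /= !eqr_nat. Qed.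

Lemma triple_set_inj : {in triple_params &, injective triple_set}.
Proof.
move=> [p1 p2] [q1 q2]; rewrite !inE /= => /and4P[p2_gt0 p1W p12W _].
move=> /and4P[q2_gt0 q1W q12W _] E.
have m1 := triple_setE p1W (q1, q2); have m2 := triple_setE p12W (q1, q2).
have m3 := triple_setE q1W (p1, p2); have m4 := triple_setE q12W (p1, p2).
rewrite -E triple_setE /= eqxx in m1; rewrite -E triple_setE /= eqxx orbT in m2.
rewrite E triple_setE /= eqxx in m3; rewrite E triple_setE /= eqxx orbT in m4.
move: m1 m2 m3 m4 => /esym h1 /esym h2 /esym h3 /esym h4.
have e1 : p1 = q1 :> nat by lia.
have e2 : p2 = q2 :> nat by lia.
by congr pair; apply: val_inj.
Qed.

Lemma pattern_setE : [set P : {set T} | asbool (in_pattern P)] = triple_set @: triple_params.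
Proof.
apply/setP => P; rewrite inE; apply/idP/imsetP.
- move/asboolP => [x [d [d_gt0 [/mapP[nx nxW ex] [/mapP[ny nyW ey] [/mapP[nz nzW ez] HP]]]]]].
  have lt_xy : (nx < ny)%N by rewrite -(ltr_nat R) -subr_gt0 -ey ex addrC addKr.
  have ed : d = (ny - nx)%N%:R by rewrite natrB ?(ltnW lt_xy) // -ey ex addrC addKr.
  have enz : nz = (nx + 3 * (ny - nx))%N.
    by apply/eqP; rewrite -(eqr_nat R) -ez ex ed natrD natrM.
  have hx : (nx < N)%N by apply: W_lt.
  have hd : (ny - nx < N)%N by have := W_lt _ nyW; lia.
  exists (Ordinal hx, Ordinal hd).
    by rewrite inE /= subn_gt0 lt_xy nxW (subnKC (ltnW lt_xy)) nyW -enz nzW.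
  have ex1 : (nx + (ny - nx))%N%:R = x + d by rewrite natrD -ed -ex.
  have ex3 : (nx + 3 * (ny - nx))%N%:R = x + 3 * d by rewrite ex ed -natrM -natrD.
  apply/setP => z; rewrite inE ex1 ex3 -ex.
  apply/idP/idP => [/HP|/or3P h]; last by apply/HP; case: h => /eqP ->; auto.
  by move=> [|[|]] ->; rewrite eqxx ?orbT.
- move=> [[p1 p2] /=]; rewrite inE /= => /and4P[p2_gt0 p1W p12W p13W] ->.
  apply/asboolP; exists p1%:R, p2%:R.
  rewrite ltr0n p2_gt0 -natrM -!natrD !map_nat_mem //; do 4!split => //.
  by move=> z; rewrite inE; split => [/or3P[] /eqP|[|[]] ->]; rewrite ?eqxx ?orbT; auto.
Qed.

Lemma S_P_map_nat :
  S_P V = (\sum_(0 <= x < N) \sum_(0 <= d < N)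
             [&& 0 < d, x \in W, x + d \in W & x + 3 * d \in W])%N.
Proof.
rewrite /S_P pattern_setE card_in_imset; last exact: triple_set_inj.
transitivity (\sum_(i < N) \sum_(j < N) ((i, j) \in triple_params : nat))%N.
  rewrite pair_big -sum1_card big_mkcond /=.
  by apply: eq_bigr => -[i j] _; case: ifP.
rewrite big_mkord; apply: eq_bigr => i _; rewrite big_mkord; apply: eq_bigr => j _.
by rewrite inE.
Qed.

End PatternsOfNaturals.

Section Wn.
Local Open Scope nat_scope.

(* 6q + c lies in W_n iff idx_lo k c <= q < idx_hi k c; M_5 = {6a - 1} is the class 5 with
   q = a - 1, and the classes 2 and 4 are empty. *)
Definition idx_lo (k c : nat) : nat :=
  match c with 1 => 12 * k | 5 => 12 * k - 1 | _ => 0 end.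
Definition idx_hi (k c : nat) : nat :=
  match c with
  | 0 => 18 * k + 1 | 1 => 24 * k | 3 => 54 * k - 1 | 5 => 24 * k - 1 | _ => 0
  end.

Definition in_class (k c q : nat) : bool := idx_lo k c <= q < idx_hi k c.
Definition in_Wn (k y : nat) : bool := in_class k (y %% 6) (y %/ 6).

Definition progression6 (c m n : nat) : seq nat := [seq 6 * a + c | a <- iota m n].

Definition Wn (k : nat) : seq nat :=
  progression6 0 0 (18 * k + 1) ++ progression6 1 (12 * k) (12 * k) ++
  progression6 3 0 (54 * k - 1) ++ progression6 5 (12 * k - 1) (12 * k).

Lemma in_Wn_classE k q c : c < 6 -> in_Wn k (6 * q + c) = in_class k c q.
Proof.
by move=> c_lt6; rewrite /in_Wn (mulnC 6) modnMDl divnMDl // modn_small ?divn_small ?addn0.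
Qed.

Lemma mem_progression6 c m n y : c < 6 ->
  (y \in progression6 c m n) = (y %% 6 == c) && (m <= y %/ 6 < m + n).
Proof.
move=> c_lt6; apply/mapP/idP => [[a a_in ->] | /andP[/eqP yc a_in]].
  by rewrite (mulnC 6) modnMDl divnMDl // modn_small ?divn_small ?addn0 ?eqxx -?mem_iota.
by exists (y %/ 6); rewrite ?mem_iota // -yc mulnC -divn_eq.
Qed.

Lemma mem_Wn k y : 0 < k -> (y \in Wn k) = in_Wn k y.
Proof.
move=> k_gt0; rewrite !mem_cat !mem_progression6 // /in_Wn /in_class.
have : y %% 6 < 6 by rewrite ltn_pmod.
by case: (y %% 6) => [|[|[|[|[|[|c]]]]]] //= _; lia.
Qed.

Lemma in_Wn_lt k y : in_Wn k y -> y < 6 * (54 * k + 1).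
Proof.
rewrite /in_Wn /in_class; have := divn_eq y 6; have : y %% 6 < 6 by rewrite ltn_pmod.
by case: (y %% 6) => [|[|[|[|[|[|c]]]]]] //=; lia.
Qed.

Lemma uniq_Wn k : uniq (Wn k).
Proof.
have uniq_prog c m n : uniq (progression6 c m n).
  by rewrite map_inj_uniq ?iota_uniq // => a b /eqP; rewrite eqn_add2r eqn_mul2l => /eqP.
have disj c c' m n m' n' : c < 6 -> c' < 6 -> c != c' ->
    has (mem (progression6 c m n)) (progression6 c' m' n') = false.
  move=> c_lt6 c'_lt6 neq_cc'; apply/negbTE/hasPn => y.
  rewrite mem_progression6 // => /andP[/eqP yc _].
  by rewrite inE mem_progression6 // yc eq_sym (negbTE neq_cc').
by rewrite !cat_uniq !has_cat !uniq_prog !disj.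
Qed.

Lemma size_Wn k : 0 < k -> size (Wn k) = 96 * k.
Proof. by move=> k_gt0; rewrite !size_cat !size_map !size_iota; lia. Qed.

End Wn.

Lemma Vn_map_nat (R : realFieldType) k : (0 < k)%N -> Vn R k = [seq n%:R | n <- Wn k].
Proof.
move=> k_gt0; rewrite /Vn /Wn /M0 /M1 /M3 /M5 !map_cat -!map_comp.
congr (_ ++ (_ ++ (_ ++ _))); try by apply: eq_map => a /=; rewrite ?addn0.
have -> : iota (12 * k) (12 * k) = map (addn 1) (iota (12 * k - 1) (12 * k)).
  by rewrite -iotaDl; congr iota; lia.
rewrite -map_comp; apply: eq_map => a /=.
by rewrite (_ : 6 * (1 + a) = 6 * a + 5 + 1)%N ?natrD ?addrK //; lia.
Qed.

Section ClassCounts.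
Local Open Scope nat_scope.

Definition is_triple (k x d : nat) : bool :=
  [&& 0 < d, in_Wn k x, in_Wn k (x + d) & in_Wn k (x + 3 * d)].

Definition class_count (k r s : nat) : nat :=
  \sum_(0 <= e < 54 * k + 1) \sum_(0 <= a < 54 * k + 1) is_triple k (6 * a + r) (6 * e + s).

Lemma sum_nat_mulr (F : nat -> nat) m B :
  \sum_(0 <= x < m * B) F x = \sum_(0 <= a < B) \sum_(0 <= r < m) F (m * a + r).
Proof.
elim: B => [|B IH]; first by rewrite muln0 !big_geq.
rewrite big_nat_recr //= -IH mulnS addnC (big_cat_nat _ (leq_addr _ _)) //=.
congr (_ + _); rewrite -{1}[m * B]add0n big_addn addKn.
by apply: eq_bigr => r _; rewrite addnC.
Qed.

Lemma S_P_Vn_class_counts (R : realFieldType) k : 0 < k ->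
  S_P (Vn R k) = \sum_(0 <= r < 6) \sum_(0 <= s < 6) class_count k r s.
Proof.
move=> k_gt0; rewrite Vn_map_nat // (@S_P_map_nat R (Wn k) (6 * (54 * k + 1))); last first.
  by move=> y; rewrite mem_Wn // => /in_Wn_lt.
under eq_bigr => x _ do under eq_bigr => d _ do rewrite !mem_Wn //.
rewrite sum_nat_mulr exchange_big /=; apply: eq_bigr => r _.
under eq_bigr => a _ do rewrite sum_nat_mulr exchange_big /=.
by rewrite exchange_big /=; apply: eq_bigr => s _; rewrite exchange_big.
Qed.

Lemma is_triple_classE k a e {r s q1 r1 q2 r2} :
  r < 6 -> r1 < 6 -> r2 < 6 -> r + s = q1 * 6 + r1 -> r + 3 * s = q2 * 6 + r2 ->
  is_triple k (6 * a + r) (6 * e + s) =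
  [&& 0 < 6 * e + s, in_class k r a, in_class k r1 (a + e + q1)
    & in_class k r2 (a + 3 * e + q2)].
Proof.
move=> r_lt6 r1_lt6 r2_lt6 Ers Er3s; rewrite /is_triple -!in_Wn_classE //.
by congr [&& _, _, in_Wn k _ & in_Wn k _]; lia.
Qed.

Definition admissible (c : nat) : bool := c \in [:: 0; 1; 3; 5].

Lemma admissible_idx_hi k c q : q < idx_hi k c -> admissible c.
Proof. by case: c => [|[|[|[|[|[|c]]]]]]. Qed.

Definition admissible_classes (r s : nat) : bool :=
  [&& admissible r, admissible ((r + s) %% 6) & admissible ((r + 3 * s) %% 6)].

Lemma class_count_inadmissible k r s :
  r < 6 -> ~~ admissible_classes r s -> class_count k r s = 0.
Proof.
move=> r_lt6 bad; rewrite /class_count big1 // => e _; rewrite big1 // => a _.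
rewrite (is_triple_classE k a e r_lt6 (ltn_pmod _ _) (ltn_pmod _ _)
                         (divn_eq _ 6) (divn_eq _ 6)) //.
apply/eqP; rewrite eqb0; apply: contra bad; rewrite /admissible_classes.
by move=> /and4P[_ /andP[_ /admissible_idx_hi ->] /andP[_ /admissible_idx_hi ->]
                  /andP[_ /admissible_idx_hi ->]].
Qed.

Lemma sum_class_counts k :
  \sum_(0 <= r < 6) \sum_(0 <= s < 6) class_count k r s =
  \sum_(rs <- [:: (0, 0); (0, 1); (0, 3); (0, 5); (1, 0); (1, 2); (1, 4);
                 (3, 0); (3, 2); (3, 3); (3, 4); (5, 0); (5, 2); (5, 4)])
     class_count k rs.1 rs.2.
Proof.
have -> : [:: (0, 0); (0, 1); (0, 3); (0, 5); (1, 0); (1, 2); (1, 4);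
             (3, 0); (3, 2); (3, 3); (3, 4); (5, 0); (5, 2); (5, 4)] =
          [seq rs <- [seq (r, s) | r <- iota 0 6, s <- iota 0 6]
                   | admissible_classes rs.1 rs.2] by [].
rewrite big_filter [RHS]big_mkcond big_allpairs /=.
apply: eq_big_nat => r /andP[_ r_lt6]; apply: eq_big_nat => s _.
by case: ifP => // /negbT /class_count_inadmissible ->.
Qed.

Lemma sum_interval n L H : \sum_(0 <= a < n) (L <= a < H) = minn n H - L.
Proof.
elim: n => [|n IH]; first by rewrite big_geq // min0n.
by rewrite big_nat_recr //= IH; case: (leqP L n); case: (ltnP n H) => /=; lia.
Qed.

Lemma sum_window (b : bool) n L0 L1 L2 H0 H1 H2 :
  \sum_(0 <= a < n) (b && [&& L0 <= a, L1 <= a, L2 <= a, a < H0, a < H1 & a < H2]) =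
  b * (minn n (minn (minn H0 H1) H2) - maxn (maxn L0 L1) L2).
Proof.
case: b; last by rewrite big1 //= mul0n.
rewrite mul1n -sum_interval; apply: eq_bigr => a _ /=.
by rewrite !geq_max !leq_min !andbA.
Qed.

Lemma class_count_window k {r s q1 r1 q2 r2} :
  r < 6 -> r1 < 6 -> r2 < 6 -> r + s = q1 * 6 + r1 -> r + 3 * s = q2 * 6 + r2 ->
  class_count k r s =
  \sum_(0 <= e < 54 * k + 1) (0 < 6 * e + s) *
    (minn (54 * k + 1) (minn (minn (idx_hi k r) (idx_hi k r1 - (e + q1)))
                             (idx_hi k r2 - (3 * e + q2)))
     - maxn (maxn (idx_lo k r) (idx_lo k r1 - (e + q1))) (idx_lo k r2 - (3 * e + q2))).
Proof.
move=> r_lt6 r1_lt6 r2_lt6 Ers Er3s; apply: eq_bigr => e _.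
rewrite -sum_window; apply: eq_bigr => a _.
rewrite (is_triple_classE k a e r_lt6 r1_lt6 r2_lt6 Ers Er3s) /in_class.
by rewrite !leq_subLR !ltn_subRL; congr (nat_of_bool _); apply/idP/idP; lia.
Qed.

Lemma minn4_eq x0 x1 x2 x3 v :
  v <= x0 -> v <= x1 -> v <= x2 -> v <= x3 -> [|| v == x0, v == x1, v == x2 | v == x3] ->
  minn x0 (minn (minn x1 x2) x3) = v.
Proof. lia. Qed.

Lemma maxn3_eq x0 x1 x2 v :
  x0 <= v -> x1 <= v -> x2 <= v -> [|| v == x0, v == x1 | v == x2] ->
  maxn (maxn x0 x1) x2 = v.
Proof. lia. Qed.

End ClassCounts.

Lemma sum_linear_nat {f : nat -> nat} {m p : nat} {A C : int} :
  (m <= p)%N -> (forall e, (m <= e < p)%N -> (f e)%:Z = A * e%:Z + C) ->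
  2 * (\sum_(m <= e < p) f e)%:Z =
  A * (p%:Z * (p%:Z - 1) - m%:Z * (m%:Z - 1)) + 2 * C * (p%:Z - m%:Z).
Proof.
elim: p => [|p IH] le_mp f_lin.
  by move: le_mp; rewrite leqn0 => /eqP ->; rewrite big_geq //; ring.
case: (ltngtP m p.+1) le_mp => // [lt_mp _|-> _]; last by rewrite big_geq //; ring.
rewrite big_nat_recr //= PoszD mulrDr IH => [|//|e /andP[le_me lt_ep]]; last first.
  by apply: f_lin; rewrite le_me ltnS ltnW.
by rewrite f_lin ?leqnn ?andbT // intS; ring.
Qed.

Lemma sum_linear_piece (f : nat -> nat) (m p n : nat) (A C : int) :
  (m <= p <= n)%N -> (forall e, (m <= e < p)%N -> (f e)%:Z = A * e%:Z + C) ->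
  2 * (\sum_(m <= e < n) f e)%:Z =
  A * (p%:Z * (p%:Z - 1) - m%:Z * (m%:Z - 1)) + 2 * C * (p%:Z - m%:Z)
  + 2 * (\sum_(p <= e < n) f e)%:Z.
Proof.
move=> /andP[le_mp le_pn] f_lin.
by rewrite (big_cat_nat le_mp le_pn) PoszD mulrDr (sum_linear_nat le_mp f_lin).
Qed.

(* [linear_piece p A C H L] peels off the quotients e in [m, p), m being the current lower
   bound of the sum: there the window of admissible a is [L e, H e), of length A e + C
   (for s = 0 the piece e = 0 has length 0 whatever the window, as d = 6e + s > 0). *)
Tactic Notation "linear_piece" uconstr(p) uconstr(A) uconstr(C) uconstr(H) uconstr(L) :=
  rewrite (@sum_linear_piece _ _ p _ A C);
  [| lia | let e := fresh "e" in
           intros e ?; rewrite /= (@minn4_eq _ _ _ _ (H e)) ?(@maxn3_eq _ _ _ (L e)); lia].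

Ltac close_pieces :=
  rewrite big_geq // mulr0 addr0 -?subzn ?PoszD ?PoszM; [ring | lia ..].

Lemma class_count_0_0 k : (0 < k)%N ->
  2 * (class_count k 0 0)%:Z = 108 * k%:Z ^+ 2 - 6 * k%:Z.
Proof.
move=> k_gt0; rewrite (@class_count_window k 0 0 0 0 0 0) //=.
linear_piece 1 0 0
  (fun _ => 18 * k + 1)%N (fun _ => 0)%N.
linear_piece (6 * k + 1)%N (-3) (18 * k%:Z + 1)
  (fun e => 18 * k + 1 - 3 * e)%N (fun _ => 0)%N.
linear_piece (54 * k + 1)%N 0 0
  (fun e => 18 * k + 1 - 3 * e)%N (fun _ => 0)%N.
close_pieces.
Qed.

Lemma class_count_0_1 k : (0 < k)%N ->
  2 * (class_count k 0 1)%:Z = 342 * k%:Z ^+ 2 + 12 * k%:Z.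
Proof.
move=> k_gt0; rewrite (@class_count_window k 0 1 0 1 0 3) //=.
linear_piece (6 * k - 1)%N 1 (6 * k%:Z + 1)
  (fun _ => 18 * k + 1)%N (fun e => 12 * k - e)%N.
linear_piece (12 * k)%N 0 (12 * k%:Z)
  (fun e => 24 * k - e)%N (fun e => 12 * k - e)%N.
linear_piece (15 * k)%N (-1) (24 * k%:Z)
  (fun e => 24 * k - e)%N (fun _ => 0)%N.
linear_piece (18 * k)%N (-3) (54 * k%:Z - 1)
  (fun e => 54 * k - 1 - 3 * e)%N (fun _ => 0)%N.
linear_piece (54 * k + 1)%N 0 0
  (fun e => 54 * k - 1 - 3 * e)%N (fun _ => 0)%N.
close_pieces.
Qed.

Lemma class_count_0_3 k : (0 < k)%N ->
  2 * (class_count k 0 3)%:Z = 540 * k%:Z ^+ 2 + 18 * k%:Z.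
Proof.
move=> k_gt0; rewrite (@class_count_window k 0 3 0 3 1 3) //=.
linear_piece (12 * k - 1)%N 0 (18 * k%:Z + 1)
  (fun _ => 18 * k + 1)%N (fun _ => 0)%N.
linear_piece (18 * k)%N (-3) (54 * k%:Z - 2)
  (fun e => 54 * k - 1 - (3 * e + 1))%N (fun _ => 0)%N.
linear_piece (54 * k + 1)%N 0 0
  (fun e => 54 * k - 1 - (3 * e + 1))%N (fun _ => 0)%N.
close_pieces.
Qed.

Lemma class_count_0_5 k : (0 < k)%N ->
  2 * (class_count k 0 5)%:Z = 342 * k%:Z ^+ 2 + 6 * k%:Z - 2.
Proof.
move=> k_gt0; rewrite (@class_count_window k 0 5 0 5 2 3) //=.
linear_piece (6 * k - 2)%N 1 (6 * k%:Z + 2)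
  (fun _ => 18 * k + 1)%N (fun e => 12 * k - 1 - e)%N.
linear_piece (12 * k - 1)%N 0 (12 * k%:Z)
  (fun e => 24 * k - 1 - e)%N (fun e => 12 * k - 1 - e)%N.
linear_piece (15 * k - 1)%N (-1) (24 * k%:Z - 1)
  (fun e => 24 * k - 1 - e)%N (fun _ => 0)%N.
linear_piece (18 * k - 1)%N (-3) (54 * k%:Z - 3)
  (fun e => 54 * k - 1 - (3 * e + 2))%N (fun _ => 0)%N.
linear_piece (54 * k + 1)%N 0 0
  (fun e => 54 * k - 1 - (3 * e + 2))%N (fun _ => 0)%N.
close_pieces.
Qed.

Lemma class_count_1_0 k : (0 < k)%N ->
  2 * (class_count k 1 0)%:Z = 48 * k%:Z ^+ 2 - 12 * k%:Z.
Proof.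
move=> k_gt0; rewrite (@class_count_window k 1 0 0 1 0 1) //=.
linear_piece 1 0 0
  (fun _ => 24 * k)%N (fun _ => 12 * k)%N.
linear_piece (4 * k)%N (-3) (12 * k%:Z)
  (fun e => 24 * k - 3 * e)%N (fun _ => 12 * k)%N.
linear_piece (54 * k + 1)%N 0 0
  (fun e => 24 * k - 3 * e)%N (fun _ => 12 * k)%N.
close_pieces.
Qed.

Lemma class_count_1_2 k : (0 < k)%N ->
  2 * (class_count k 1 2)%:Z = 48 * k%:Z ^+ 2 + 4 * k%:Z.
Proof.
move=> k_gt0; rewrite (@class_count_window k 1 2 0 3 1 1) //=.
linear_piece (4 * k)%N (-3) (12 * k%:Z - 1)
  (fun e => 24 * k - (3 * e + 1))%N (fun _ => 12 * k)%N.
linear_piece (54 * k + 1)%N 0 0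
  (fun e => 24 * k - (3 * e + 1))%N (fun _ => 12 * k)%N.
close_pieces.
Qed.

Lemma class_count_1_4 k : (0 < k)%N ->
  2 * (class_count k 1 4)%:Z = 48 * k%:Z ^+ 2 - 4 * k%:Z.
Proof.
move=> k_gt0; rewrite (@class_count_window k 1 4 0 5 2 1) //=.
linear_piece (4 * k)%N (-3) (12 * k%:Z - 2)
  (fun e => 24 * k - (3 * e + 2))%N (fun _ => 12 * k)%N.
linear_piece (54 * k + 1)%N 0 0
  (fun e => 24 * k - (3 * e + 2))%N (fun _ => 12 * k)%N.
close_pieces.
Qed.

Lemma class_count_3_0 k : (0 < k)%N ->
  2 * (class_count k 3 0)%:Z = 972 * k%:Z ^+ 2 - 90 * k%:Z + 2.
Proof.
move=> k_gt0; rewrite (@class_count_window k 3 0 0 3 0 3) //=.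
linear_piece 1 0 0
  (fun _ => 54 * k - 1)%N (fun _ => 0)%N.
linear_piece (18 * k)%N (-3) (54 * k%:Z - 1)
  (fun e => 54 * k - 1 - 3 * e)%N (fun _ => 0)%N.
linear_piece (54 * k + 1)%N 0 0
  (fun e => 54 * k - 1 - 3 * e)%N (fun _ => 0)%N.
close_pieces.
Qed.

Lemma class_count_3_2 k : (0 < k)%N ->
  2 * (class_count k 3 2)%:Z = 378 * k%:Z ^+ 2 - 6 * k%:Z.
Proof.
move=> k_gt0; rewrite (@class_count_window k 3 2 0 5 1 3) //=.
linear_piece (12 * k - 1)%N 0 (12 * k%:Z)
  (fun e => 24 * k - 1 - e)%N (fun e => 12 * k - 1 - e)%N.
linear_piece (15 * k)%N (-1) (24 * k%:Z - 1)
  (fun e => 24 * k - 1 - e)%N (fun _ => 0)%N.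
linear_piece (18 * k)%N (-3) (54 * k%:Z - 2)
  (fun e => 54 * k - 1 - (3 * e + 1))%N (fun _ => 0)%N.
linear_piece (54 * k + 1)%N 0 0
  (fun e => 54 * k - 1 - (3 * e + 1))%N (fun _ => 0)%N.
close_pieces.
Qed.

Lemma class_count_3_3 k : (0 < k)%N ->
  2 * (class_count k 3 3)%:Z = 108 * k%:Z ^+ 2 + 6 * k%:Z.
Proof.
move=> k_gt0; rewrite (@class_count_window k 3 3 1 0 2 0) //=.
linear_piece (6 * k)%N (-3) (18 * k%:Z - 1)
  (fun e => 18 * k + 1 - (3 * e + 2))%N (fun _ => 0)%N.
linear_piece (54 * k + 1)%N 0 0
  (fun e => 18 * k + 1 - (3 * e + 2))%N (fun _ => 0)%N.
close_pieces.
Qed.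

Lemma class_count_3_4 k : (0 < k)%N ->
  2 * (class_count k 3 4)%:Z = 378 * k%:Z ^+ 2 - 12 * k%:Z.
Proof.
move=> k_gt0; rewrite (@class_count_window k 3 4 1 1 2 3) //=.
linear_piece (12 * k - 1)%N 0 (12 * k%:Z)
  (fun e => 24 * k - (e+1))%N (fun e => 12 * k - (e+1))%N.
linear_piece (15 * k - 1)%N (-1) (24 * k%:Z - 1)
  (fun e => 24 * k - (e+1))%N (fun _ => 0)%N.
linear_piece (18 * k - 1)%N (-3) (54 * k%:Z - 3)
  (fun e => 54 * k - 1 - (3 * e + 2))%N (fun _ => 0)%N.
linear_piece (54 * k + 1)%N 0 0
  (fun e => 54 * k - 1 - (3 * e + 2))%N (fun _ => 0)%N.
close_pieces.
Qed.

Lemma class_count_5_0 k : (0 < k)%N ->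
  2 * (class_count k 5 0)%:Z = 48 * k%:Z ^+ 2 - 12 * k%:Z.
Proof.
move=> k_gt0; rewrite (@class_count_window k 5 0 0 5 0 5) //=.
linear_piece 1 0 0
  (fun _ => 24 * k - 1)%N (fun _ => 12 * k - 1)%N.
linear_piece (4 * k)%N (-3) (12 * k%:Z)
  (fun e => 24 * k - 1 - 3 * e)%N (fun _ => 12 * k - 1)%N.
linear_piece (54 * k + 1)%N 0 0
  (fun e => 24 * k - 1 - 3 * e)%N (fun _ => 12 * k - 1)%N.
close_pieces.
Qed.

Lemma class_count_5_2 k : (0 < k)%N ->
  2 * (class_count k 5 2)%:Z = 48 * k%:Z ^+ 2 + 4 * k%:Z.
Proof.
move=> k_gt0; rewrite (@class_count_window k 5 2 1 1 1 5) //=.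
linear_piece (4 * k)%N (-3) (12 * k%:Z - 1)
  (fun e => 24 * k - 1 - (3 * e + 1))%N (fun _ => 12 * k - 1)%N.
linear_piece (54 * k + 1)%N 0 0
  (fun e => 24 * k - 1 - (3 * e + 1))%N (fun _ => 12 * k - 1)%N.
close_pieces.
Qed.

Lemma class_count_5_4 k : (0 < k)%N ->
  2 * (class_count k 5 4)%:Z = 48 * k%:Z ^+ 2 - 4 * k%:Z.
Proof.
move=> k_gt0; rewrite (@class_count_window k 5 4 1 3 2 5) //=.
linear_piece (4 * k - 1)%N (-3) (12 * k%:Z - 2)
  (fun e => 24 * k - 1 - (3 * e + 2))%N (fun _ => 12 * k - 1)%N.
linear_piece (4 * k)%N 0 1
  (fun e => 24 * k - 1 - (3 * e + 2))%N (fun _ => 12 * k - 1)%N.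
linear_piece (54 * k + 1)%N 0 0
  (fun e => 24 * k - 1 - (3 * e + 2))%N (fun _ => 12 * k - 1)%N.
close_pieces.
Qed.

Lemma S_P_Vn (R : realFieldType) k : (0 < k)%N ->
  (S_P (Vn R k))%:Z = 1728 * k%:Z ^+ 2 - 48 * k%:Z.
Proof.
move=> k_gt0; apply: (mulfI (_ : 2 != 0)) => //.
rewrite S_P_Vn_class_counts // sum_class_counts !big_cons big_nil /= addn0 !PoszD !mulrDr.
rewrite class_count_0_0 // class_count_0_1 // class_count_0_3 // class_count_0_5 //.
rewrite class_count_1_0 // class_count_1_2 // class_count_1_4 //.
rewrite class_count_3_0 // class_count_3_2 // class_count_3_3 // class_count_3_4 //.
rewrite class_count_5_0 // class_count_5_2 // class_count_5_4 //.
ring.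
Qed.

Lemma S_P_Vn_real (R : realFieldType) k : (0 < k)%N ->
  (S_P (Vn R k))%:R = (3 * ((96 * k)%:R) ^+ 2 - 8 * (96 * k)%:R) / 16 :> R.
Proof.
move=> k_gt0; rewrite -[LHS]/((S_P (Vn R k))%:Z%:~R) S_P_Vn // expr2.
by rewrite intrB !intrM -!pmulrn natrM; field.
Qed.

Lemma S_P_Vn_ratio (R : realFieldType) k : (0 < k)%N ->
  (S_P (Vn R k))%:R / ((96 * k)%:R) ^+ 2 - 3 / 16 = - (2 * (96 * k)%:R)^-1 :> R.
Proof.
by move=> k_gt0; rewrite S_P_Vn_real //; field; rewrite pnatr_eq0 -lt0n.
Qed.

Theorem mainTheorem13 (R : archiRealFieldType) :
  (forall k : nat, (0 < k)%N ->
     uniq (Vn R k) /\ size (Vn R k) = (96 * k)%N /\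
     (S_P (Vn R k))%:R = (3 * ((96 * k)%:R) ^+ 2 - 8 * (96 * k)%:R) / 16 :> R) /\
  (forall eps : R, 0 < eps -> exists K : nat, forall k : nat, (K <= k)%N ->
     `| (S_P (Vn R k))%:R / ((96 * k)%:R) ^+ 2 - 3 / 16 | < eps).
Proof.
split=> [k k_gt0 | eps eps_gt0].
  split; [|split; [|exact: S_P_Vn_real]]; rewrite Vn_map_nat //; last first.
    by rewrite size_map size_Wn.
  by rewrite map_inj_uniq ?uniq_Wn // => x y /eqP; rewrite eqr_nat => /eqP.
exists (Num.Def.archi_bound eps^-1).+1 => k lt_bound_k.
have k_gt0 : (0 < k)%N by apply: leq_ltn_trans lt_bound_k.
rewrite S_P_Vn_ratio // normrN ger0_norm ?invr_ge0 ?mulr_ge0 //.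
rewrite -[eps]invrK ltf_pV2 ?posrE ?invr_gt0 ?mulr_gt0 ?ltr0n ?muln_gt0 //.
have eps_inv_gt0 : 0 < eps^-1 by rewrite invr_gt0.
have := archi_boundP (ltW eps_inv_gt0).
have : (Num.Def.archi_bound eps^-1)%:R <= k%:R :> R by rewrite ler_nat ltnW.
rewrite natrM; have := ler0n R k; lra.
Qed.
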